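(* Let $f_1,\dots,f_n:\mathbb{R}^p\to\mathbb{R}$ be continuously differentiable, let $m>0$, and consider $g(x)=\frac1n\sum_{i=1}^nf_i(x)+\frac m2\|x\|^2$ with minimizer $x^*$. Assume $\sum_{i=1}^nf_i\in\mathcal F(0,L)$ and $i_k$ sampled IID uniformly from $\{1,\dots,n\}$. Consider SDCA with stepsize $\alpha$ initialized from arbitrary $y_i^0\in\mathbb{R}^p$. 1. If every $f_i\in\mathcal F(0,L)$, then for any $0<\alpha\le\frac2{L+2mn}$, $$\mathbb{E}\left[\|x^k-x^*\|^2+\frac{\alpha}{(1-\alpha mn)mn}\sum_{i=1}^n\|y_i^k+\nabla f_i(x^* )\|^2\right]\le(1-m\alpha)^kR^0,$$ where $R^0=\|x^0-x^*\|^2+\frac{\alpha}{(1-\alpha mn)mn}\sum_i\|y_i^0+\nabla f_i(x^* )\|^2$. 2. If every $f_i$ is $L$-smooth, then the bound of item 1 holds for any $0<\alpha\le\frac m{L^2+m^2n}$. In particular, for $\alpha=\frac m{m^2n+L^2}$, $$\mathbb{E}\left[\|x^k-x^*\|^2+\frac1{L^2n}\sum_{i=1}^n\|y_i^k+\nabla f_i(x^* )\|^2\right]\le\left(1-\frac{m^2}{m^2n+L^2}\right)^kR^0,$$ where $R^0=\|x^0-x^*\|^2+\frac1{L^2n}\sum_i\|y_i^0+\nabla f_i(x^* )\|^2$.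
   Context: A continuously differentiable $f:\mathbb{R}^p\to\mathbb{R}$ is $L$-smooth if $\|\nabla f(x)-\nabla f(y)\|\le L\|x-y\|$ for all $x,y$; $\mathcal F(0,L)$ denotes the convex, continuously differentiable, $L$-smooth functions. SDCA (without duality): $x^k=\frac1{mn}\sum_{i=1}^ny_i^k$ for all $k\ge0$, and $y_i^{k+1}=y_i^k-\alpha mn(\nabla f_i(x^k)+y_i^k)$ if $i=i_k$, $y_i^{k+1}=y_i^k$ otherwise. Expectation is over the random indices. *)

From HB Require Import structures.
From mathcomp Require Import all_boot all_order all_algebra.
From mathcomp Require Import all_classical all_reals all_analysis.
Set Implicit Arguments. Unset Strict Implicit. Unset Printing Implicit Defensive.
Import Order.TTheory GRing.Theory Num.Theory.
Import numFieldNormedType.Exports.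
Local Open Scope ring_scope.

Section Defs.
Variables (R : realType) (p : nat).

Definition dotp (u v : 'rV[R]_p) : R := \sum_(j < p) u ord0 j * v ord0 j.
Definition enorm (u : 'rV[R]_p) : R := Num.sqrt (dotp u u).

Definition is_gradient (f : 'rV[R]_p -> R) (gf : 'rV[R]_p -> 'rV[R]_p) : Prop :=
  forall x, differentiable f x /\ forall h, 'd f x h = dotp (gf x) h.

Definition C1_with_grad f gf : Prop := is_gradient f gf /\ continuous gf.

Definition L_smooth (L : R) (gf : 'rV[R]_p -> 'rV[R]_p) : Prop :=
  forall x y, enorm (gf x - gf y) <= L * enorm (x - y).

Definition convex_fun (f : 'rV[R]_p -> R) : Prop :=
  forall x y (t : R), 0 <= t -> t <= 1 ->
    f (t *: x + (1 - t) *: y) <= t * f x + (1 - t) * f y.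

Definition in_F0L (L : R) f gf : Prop :=
  convex_fun f /\ C1_with_grad f gf /\ L_smooth L gf.

Variables (n : nat) (m alpha : R) (grad : 'I_n -> 'rV[R]_p -> 'rV[R]_p).

Definition sdca_x (y : 'I_n -> 'rV[R]_p) : 'rV[R]_p :=
  (m * n%:R)^-1 *: \sum_(i < n) y i.

Definition sdca_step (y : 'I_n -> 'rV[R]_p) (ik : 'I_n) : 'I_n -> 'rV[R]_p :=
  fun i => if i == ik then y i - (alpha * m * n%:R) *: (grad i (sdca_x y) + y i)
           else y i.

(* y^k given the realised indices i_0, ..., i_{k-1} *)
Definition sdca_y (y0 : 'I_n -> 'rV[R]_p) (s : seq 'I_n) : 'I_n -> 'rV[R]_p :=
  foldl sdca_step y0 s.

(* Expectation over i_0,...,i_{k-1} IID uniform on 'I_n: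
   average over all k-tuples of indices. *)
Definition Exp_unif (k : nat) (F : seq 'I_n -> R) : R :=
  (n%:R ^+ k)^-1 * \sum_(s : k.-tuple 'I_n) F (tval s).

Definition lyap (c : R) (xstar : 'rV[R]_p) (y : 'I_n -> 'rV[R]_p) : R :=
  enorm (sdca_x y - xstar) ^+ 2
  + c * \sum_(i < n) enorm (y i + grad i xstar) ^+ 2.

End Defs.

(* Write e = x - xstar, eps_i = y_i + grad f_i(xstar), u_i = grad f_i(x) - grad f_i(xstar) and
   beta = alpha m n.  Updating coordinate i moves x by -alpha (eps_i + u_i) and y_i by
   -beta (eps_i + u_i); for the weight c = alpha / ((1 - beta) m n) the Lyapunov function
   V = |e|^2 + c sum_i |eps_i|^2 changes by
     -2 alpha <e, eps_i + u_i> + alpha^2 / (1 - beta) (|u_i|^2 - |eps_i|^2).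
   Optimality of xstar, sum_i grad f_i(xstar) = - m n xstar, and x = (sum_i y_i) / (m n)
   give sum_i eps_i = m n e, so the average over i is exactly
     (1 - m alpha) V - alpha / n (2 sum_i <e, u_i> + m n |e|^2 - alpha / (1 - beta) sum_i |u_i|^2).
   The bracket is nonnegative for the admissible step sizes: by cocoercivity of each grad f_i
   in item 1, by L-smoothness of each grad f_i and monotonicity of grad (sum_i f_i) in item 2.
   Averaging over the independent uniform indices one step at a time gives (1 - m alpha)^k. *)

From HB Require Import structures.
From mathcomp Require Import all_boot all_order all_algebra.
From mathcomp Require Import all_classical all_reals all_analysis.
From mathcomp Require Import ring lra.
Import Order.TTheory GRing.Theory Num.Theory.
Import numFieldNormedType.Exports.
Local Open Scope ring_scope.
Local Open Scope classical_set_scope.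

Lemma affine_cvg_at_right0 {R : realType} (a K : R) :
  a + t * K @[t --> 0^'+] --> a.
Proof.
apply: cvg_at_right_filter.
have at0 : a + t * K @[t --> (0 : R)] --> a + 0 * K.
  by apply: cvgD; [exact: cvg_cst | apply: cvgMl; exact: cvg_id].
by rewrite mul0r addr0 in at0.
Qed.

Section DirectionalDerivative.
Context {R : realType} {V : normedModType R}.
Context {f : V -> R} {x h : V}.
Hypothesis df : differentiable f x.

Lemma diff_quotient_cvg :
  t^-1 * (f (t *: h + x) - f x) @[t --> 0^'+] --> 'd f x h.
Proof.
have dv : derivable f x h := diff_derivable (v := h) df.
rewrite -deriveE //; apply: cvg_trans dv; apply: cvg_app => A [d d0 Ad].
by exists d => // t td t0; apply: Ad => //; exact: lt0r_neq0.
Qed.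

Lemma diff_le_of_quotient_le {a : R} (K : R) :
  (forall t : R, 0 < t -> t <= 1 -> t^-1 * (f (t *: h + x) - f x) <= a + t * K) ->
  'd f x h <= a.
Proof.
move=> le_quot; apply: (ler_cvg_to diff_quotient_cvg (affine_cvg_at_right0 a K)).
near=> t; apply: le_quot; near: t; first exact: nbhs_right_gt.
exact: nbhs_right_le.
Unshelve. all: end_near.
Qed.

Lemma diff_ge_of_quotient_ge {a : R} (K : R) :
  (forall t : R, 0 < t -> t <= 1 -> a + t * K <= t^-1 * (f (t *: h + x) - f x)) ->
  a <= 'd f x h.
Proof.
move=> ge_quot; apply: (ler_cvg_to (affine_cvg_at_right0 a K) diff_quotient_cvg).
near=> t; apply: ge_quot; near: t; first exact: nbhs_right_gt.
exact: nbhs_right_le.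
Unshelve. all: end_near.
Qed.

End DirectionalDerivative.

Section InnerProduct.
Context {R : realType} {p : nat}.
Implicit Types (u v w : 'rV[R]_p) (k : R).

Lemma dotpC u v : dotp u v = dotp v u.
Proof. by apply: eq_bigr => j _; rewrite mulrC. Qed.

Lemma dotpDl u v w : dotp (u + v) w = dotp u w + dotp v w.
Proof. by rewrite /dotp -big_split; apply: eq_bigr => j _; rewrite mxE mulrDl. Qed.

Lemma dotpDr u v w : dotp w (u + v) = dotp w u + dotp w v.
Proof. by rewrite dotpC dotpDl !(dotpC w). Qed.

Lemma dotpZl k u v : dotp (k *: u) v = k * dotp u v.
Proof. by rewrite /dotp mulr_sumr; apply: eq_bigr => j _; rewrite mxE mulrA. Qed.

Lemma dotpZr k u v : dotp u (k *: v) = k * dotp u v.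
Proof. by rewrite dotpC dotpZl dotpC. Qed.

Lemma dotpNl u v : dotp (- u) v = - dotp u v.
Proof. by rewrite -scaleN1r dotpZl mulN1r. Qed.

Lemma dotpNr u v : dotp u (- v) = - dotp u v.
Proof. by rewrite dotpC dotpNl dotpC. Qed.

Lemma dotpBl u v w : dotp (u - v) w = dotp u w - dotp v w.
Proof. by rewrite dotpDl dotpNl. Qed.

Lemma dotpBr u v w : dotp w (u - v) = dotp w u - dotp w v.
Proof. by rewrite dotpDr dotpNr. Qed.

Lemma dotp_sumr (I : finType) (F : I -> 'rV[R]_p) u :
  dotp u (\sum_i F i) = \sum_i dotp u (F i).
Proof.
rewrite /dotp exchange_big /=; apply: eq_bigr => j _.
by rewrite summxE mulr_sumr.
Qed.

Lemma dotp_ge0 u : 0 <= dotp u u.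
Proof. by apply: sumr_ge0 => j _; rewrite -expr2 sqr_ge0. Qed.

Lemma dotp_eq0 u : (dotp u u == 0) = (u == 0).
Proof.
apply/idP/eqP => [|->]; last by rewrite /dotp big1 // => j _; rewrite mxE mul0r.
rewrite /dotp psumr_eq0 => [/allP u0|j _]; last by rewrite -expr2 sqr_ge0.
apply/rowP => j; rewrite mxE; apply/eqP.
by rewrite -sqrf_eq0 expr2; apply: u0; exact: mem_index_enum.
Qed.

Lemma sqr_enorm u : enorm u ^+ 2 = dotp u u.
Proof. by rewrite /enorm sqr_sqrtr // dotp_ge0. Qed.

Lemma dotp_subZ u v k :
  dotp (u - k *: v) (u - k *: v) = dotp u u - 2 * k * dotp u v + k ^+ 2 * dotp v v.
Proof. by rewrite !(dotpBl, dotpBr, dotpZl, dotpZr) (dotpC v u); ring. Qed.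

Lemma dotp_le_of_sqr_le u v k : 0 < k ->
  dotp u u <= k ^+ 2 * dotp v v -> dotp u v <= k * dotp v v.
Proof.
by move=> k0 uv; have := dotp_ge0 (u - k *: v); rewrite dotp_subZ; nra.
Qed.


Lemma L_smooth_dotp {L} {gf : 'rV[R]_p -> 'rV[R]_p} x y : 0 <= L -> L_smooth L gf ->
  dotp (gf x - gf y) (gf x - gf y) <= L ^+ 2 * dotp (x - y) (x - y).
Proof.
move=> L0 /(_ x y); rewrite -!sqr_enorm => smooth.
by rewrite -exprMn lerXn2r // ?nnegrE ?mulr_ge0 ?sqrtr_ge0.
Qed.

End InnerProduct.

Section GradientInequalities.
Context {R : realType} {p : nat}.
Implicit Types (f : 'rV[R]_p -> R) (gf : 'rV[R]_p -> 'rV[R]_p) (x y d : 'rV[R]_p).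

Lemma is_derive_along_line {f gf} x d (t : R) : is_gradient f gf ->
  is_derive t 1 (fun s : R => f (s *: d + x)) (dotp (gf (t *: d + x)) d).
Proof.
move=> /(_ (t *: d + x))[df dfE].
have quotE : (fun s : R => s^-1 *: (((fun s => f (s *: d + x)) \o shift t) (s *: 1)
      - f (t *: d + x))) =
    (fun s : R => s^-1 *: ((f \o shift (t *: d + x)) (s *: d) - f (t *: d + x))).
  by apply/funext => s /=; rewrite [s *: 1]mulr1 scalerDl addrA.
split; first by rewrite /derivable quotE; exact: diff_derivable.
by rewrite /derive quotE -/(derive f (t *: d + x) d) deriveE ?dfE.
Qed.

Lemma L_smooth_incr_dotp_le {L gf} x d (t : R) : 0 < L -> 0 < t -> L_smooth L gf ->
  dotp (gf (t *: d + x) - gf x) d <= L * t * dotp d d.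
Proof.
move=> L0 t0 smooth; apply: dotp_le_of_sqr_le; first exact: mulr_gt0.
have -> : (L * t) ^+ 2 * dotp d d = L ^+ 2 * (t * (t * dotp d d)) by ring.
by have := L_smooth_dotp (t *: d + x) x (ltW L0) smooth; rewrite addrK dotpZl dotpZr.
Qed.

Lemma descent_lemma {f gf L} x d : 0 < L -> is_gradient f gf -> L_smooth L gf ->
  f (d + x) <= f x + dotp (gf x) d + L / 2 * dotp d d.
Proof.
move=> L0 grad smooth.
pose A := dotp (gf x) d; pose B := L / 2 * dotp d d.
pose psi s := f (s *: d + x) - s * A - s ^+ 2 * B.
have dpsi (t : R) : is_derive t (1 : R) psi (dotp (gf (t *: d + x)) d - A - 2 * t * B).
  have := is_derive_along_line x d t grad => ?; apply: is_derive_eq.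
  by rewrite !scaler0 !add0r /GRing.scale /=; ring.
have : psi 1 <= psi 0.
  apply: ler0_derive1_nincr (lexx 0) ler01 (lexx 1).
  - by move=> t _; have [] := dpsi t.
  - move=> t; rewrite in_itv /= => /andP[t0 _].
    rewrite derive1E; have [_ ->] := dpsi t.
    have := L_smooth_incr_dotp_le x d t L0 t0 smooth.
    have -> : 2 * t * B = L * t * dotp d d by rewrite /B; field.
    by rewrite /A dotpBl; lra.
  - apply: continuous_subspaceT => t; apply: differentiable_continuous.
    by apply/derivable1_diffP; have [] := dpsi t.
by rewrite /psi /A /B scale1r scale0r add0r expr1n expr0n /= !mul1r !mul0r; lra.
Qed.

Lemma convex_gradient_ineq {f gf} x y : convex_fun f -> is_gradient f gf ->
  f x + dotp (gf x) (y - x) <= f y.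
Proof.
move=> cvx /(_ x)[df <-].
rewrite -lerBrDl; apply: (diff_le_of_quotient_le df 0) => t t0 t1.
have := cvx y x t (ltW t0) t1.
have -> : t *: y + (1 - t) *: x = t *: (y - x) + x.
  by apply/rowP => j; rewrite !mxE; ring.
move=> chord; rewrite mulr0 addr0 mulrC ler_pdivrMr //; nra.
Qed.

Lemma convex_gradient_monotone {f gf} x y : convex_fun f -> is_gradient f gf ->
  0 <= dotp (gf x - gf y) (x - y).
Proof.
move=> cvx grad.
have := convex_gradient_ineq x y cvx grad; have := convex_gradient_ineq y x cvx grad.
by rewrite dotpBl -(opprB y x) !dotpNr; lra.
Qed.

Lemma F0L_gradient_ineq {f gf L} x y : 0 < L -> in_F0L L f gf ->
  f x + dotp (gf x) (y - x) + dotp (gf y - gf x) (gf y - gf x) / (2 * L) <= f y.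
Proof.
move=> L0 [cvx [[grad _] smooth]].
set u := gf y - gf x.
have uE : dotp (gf y) u - dotp (gf x) u = dotp u u by rewrite -dotpBl.
have lower := convex_gradient_ineq x (y - L^-1 *: u) cvx grad.
have upper := descent_lemma y (- (L^-1 *: u)) L0 grad smooth.
rewrite addrC in upper; rewrite addrAC dotpBr dotpZr in lower.
rewrite dotpNr dotpNl !dotpNr !dotpZl !dotpZr opprK in upper.
have quadE : L / 2 * (L^-1 * (L^-1 * dotp u u)) = L^-1 * dotp u u - dotp u u / (2 * L).
  by field; rewrite gt_eqF.
have linE : L^-1 * dotp (gf y) u - L^-1 * dotp (gf x) u = L^-1 * dotp u u.
  by rewrite -mulrBr uE.
lra.
Qed.

Lemma F0L_cocoercive {f gf L} x y : 0 < L -> in_F0L L f gf ->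
  dotp (gf y - gf x) (gf y - gf x) <= L * dotp (gf y - gf x) (y - x).
Proof.
move=> L0 F0L; have := F0L_gradient_ineq x y L0 F0L.
have := F0L_gradient_ineq y x L0 F0L.
rewrite -(opprB (gf y)) -(opprB y) dotpNl !dotpNr opprK.
set U := dotp (gf y - gf x) (gf y - gf x).
have halves : U / (2 * L) + U / (2 * L) = U / L by field; rewrite gt_eqF.
by rewrite dotpBl -ler_pdivrMl // mulrC; lra.
Qed.

Lemma gradient_at_regularized_min {F GF} (mu : R) xs : 0 < mu -> is_gradient F GF ->
  (forall x, F xs + mu / 2 * enorm xs ^+ 2 <= F x + mu / 2 * enorm x ^+ 2) ->
  GF xs = - mu *: xs.
Proof.
move=> mu0 grad xs_min.
have GF_ge h : - mu * dotp xs h <= dotp (GF xs) h.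
  have [dF <-] := grad xs.
  apply: (diff_ge_of_quotient_ge dF (- (mu / 2 * dotp h h))) => t t0 _.
  have := xs_min (t *: h + xs).
  rewrite !sqr_enorm !(dotpDl, dotpDr, dotpZl, dotpZr) (dotpC h xs) => le_min.
  by rewrite ler_pdivlMl //; nra.
pose w := GF xs + mu *: xs.
have : dotp w w <= 0 by have := GF_ge (- w); rewrite !dotpNr /w dotpDl dotpZl; lra.
rewrite le_eqVlt ltNge dotp_ge0 orbF dotp_eq0 addr_eq0 => /eqP ->.
by rewrite scaleNr.
Qed.

Lemma gradient_at_scaled_regularized_min {F GF} {N m : R} {xs} :
  0 < N -> 0 < m -> is_gradient F GF ->
  (forall x, N^-1 * F xs + m / 2 * enorm xs ^+ 2 <= N^-1 * F x + m / 2 * enorm x ^+ 2) ->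
  GF xs = - (m * N) *: xs.
Proof.
move=> N_gt0 m_gt0 grad xs_min; apply: gradient_at_regularized_min grad _ => [|x].
  exact: mulr_gt0.
have := ler_wpM2l (ltW N_gt0) (xs_min x).
by rewrite !mulrDr !mulrA mulfV ?gt_eqF // !mul1r (mulrC N m).
Qed.

End GradientInequalities.

Section UniformExpectation.
Context {R : realType} {n : nat}.
Implicit Types (k : nat) (F : seq 'I_n -> R).

Lemma Exp_unif0 F : Exp_unif 0 F = F [::].
Proof.
rewrite /Exp_unif expr0 invr1 mul1r (big_pred1 [tuple]) // => t /=.
by apply/esym/eqP; exact: tuple0.
Qed.

Lemma Exp_unifS k F :
  Exp_unif k.+1 F = n%:R^-1 * \sum_(i < n) Exp_unif k (fun s => F (i :: s)).
Proof.
rewrite /Exp_unif exprS invfM -mulr_sumr -mulrA; congr (_ * (_ * _)).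
rewrite pair_big /= (reindex (fun q : 'I_n * k.-tuple 'I_n => [tuple of q.1 :: q.2])) //=.
exists (fun t : k.+1.-tuple 'I_n => (thead t, [tuple of behead t])).
  by move=> [i s] _ /=; rewrite theadE; congr pair; apply: val_inj.
by move=> t _; rewrite [in RHS](tuple_eta t).
Qed.

Lemma Exp_unif_foldl_le {S : Type} {step : S -> 'I_n -> S} {V : S -> R} {rho : R} :
  0 <= rho -> (forall y, n%:R^-1 * \sum_(i < n) V (step y i) <= rho * V y) ->
  forall k y0, Exp_unif k (fun s => V (foldl step y0 s)) <= rho ^+ k * V y0.
Proof.
move=> rho_ge0 step_le; elim=> [|k IHk] y0; first by rewrite Exp_unif0 expr0 mul1r.
rewrite Exp_unifS /=; apply: le_trans (_ : n%:R^-1 * \sum_i rho ^+ k * V (step y0 i) <= _).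
  by apply: ler_wpM2l; [rewrite invr_ge0 ler0n | apply: ler_sum => i _; exact: IHk].
rewrite -mulr_sumr mulrCA exprSr -mulrA.
by apply: ler_wpM2l; [exact: exprn_ge0 | exact: step_le].
Qed.

End UniformExpectation.

Lemma sum_update {I : finType} {V : zmodType} (F : I -> V) i (G : I -> V) :
  (forall j, j != i -> G j = F j) -> \sum_j G j = \sum_j F j - F i + G i.
Proof.
move=> GF; rewrite (bigD1 i) //= [in RHS](bigD1 i) //= [F i + _]addrC addrK addrC.
by congr (_ + _); apply: eq_bigr => j /GF.
Qed.

Section SDCA.
Context {R : realType} {p n : nat}.
Context {m alpha : R} {grad : 'I_n -> 'rV[R]_p -> 'rV[R]_p} {xs : 'rV[R]_p}.
Hypotheses (n_gt0 : (0 < n)%N) (m_gt0 : 0 < m).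

Local Notation beta := (alpha * m * n%:R).
Local Notation c := (alpha / ((1 - beta) * (m * n%:R))).

Fact n_neq0 : n%:R != 0 :> R.
Proof. by rewrite pnatr_eq0 -lt0n. Qed.

Fact m_neq0 : m != 0.
Proof. exact: lt0r_neq0. Qed.

Lemma sdca_step_other y i j : j != i -> sdca_step m alpha grad y i j = y j.
Proof. by rewrite /sdca_step => /negbTE ->. Qed.

Lemma sdca_x_step y i :
  sdca_x m (sdca_step m alpha grad y i) = sdca_x m y - alpha *: (grad i (sdca_x m y) + y i).
Proof.
rewrite {1}/sdca_x (sum_update y i) => [|j]; last exact: sdca_step_other.
rewrite /sdca_step eqxx addrA subrK scalerBr scalerA -/(sdca_x m y).
by congr (_ - _ *: _); field; rewrite n_neq0 m_neq0.
Qed.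

Lemma lyap_sdca_step y i (x := sdca_x m y) (eps := y i + grad i xs)
    (u := grad i x - grad i xs) : beta != 1 ->
  lyap m grad c xs (sdca_step m alpha grad y i) =
  lyap m grad c xs y - 2 * alpha * dotp (x - xs) (eps + u)
  + alpha ^+ 2 / (1 - beta) * (dotp u u - dotp eps eps).
Proof.
move=> beta_neq1.
rewrite /lyap sdca_x_step -/x (sum_update (fun j => enorm (y j + grad j xs) ^+ 2) i).
  2: by move=> j ji; rewrite sdca_step_other.
rewrite /sdca_step eqxx.
have -> : x - alpha *: (grad i x + y i) - xs = (x - xs) - alpha *: (eps + u).
  by apply/rowP => j; rewrite !mxE; ring.
have -> : y i - beta *: (grad i x + y i) + grad i xs = eps - beta *: (eps + u).
  by apply/rowP => j; rewrite !mxE; ring.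
rewrite -/eps; clearbody u eps; move: (x - xs) => e.
(* [alpha ^+ 2 + c * beta ^+ 2 = c * beta = alpha ^+ 2 / (1 - beta)] cancels the terms in
   [dotp eps u]. *)
rewrite !sqr_enorm !dotp_subZ !(dotpDl, dotpDr) (dotpC u eps).
by field; rewrite subr_eq0 eq_sym beta_neq1 n_neq0 m_neq0.
Qed.

Hypothesis stationarity : \sum_i grad i xs = - (m * n%:R) *: xs.

Lemma mean_lyap_sdca_step y (x := sdca_x m y) : beta != 1 ->
  n%:R^-1 * \sum_i lyap m grad c xs (sdca_step m alpha grad y i) =
  (1 - m * alpha) * lyap m grad c xs y
  - alpha / n%:R * (2 * \sum_i dotp (x - xs) (grad i x - grad i xs)
                   + m * n%:R * dotp (x - xs) (x - xs)
                   - alpha / (1 - beta)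
                     * \sum_i dotp (grad i x - grad i xs) (grad i x - grad i xs)).
Proof.
move=> beta_neq1.
have sum_eps : \sum_i (y i + grad i xs) = (m * n%:R) *: (x - xs).
  rewrite big_split /= stationarity scalerBr scaleNr; congr (_ - _).
  by rewrite /x /sdca_x scalerA mulfV ?scale1r // mulf_neq0 ?m_neq0 ?n_neq0.
have lyapE : lyap m grad c xs y =
    dotp (x - xs) (x - xs) + c * \sum_i dotp (y i + grad i xs) (y i + grad i xs).
  by rewrite /lyap sqr_enorm; congr (_ + _ * _); apply: eq_bigr => i _; rewrite sqr_enorm.
rewrite (eq_bigr _ (fun i _ => lyap_sdca_step y i beta_neq1)) -/x.
set V := lyap _ _ _ _ y; set Su := \sum_i dotp _ (grad i x - grad i xs).
set Suu := \sum_i dotp (grad i x - grad i xs) _.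
rewrite big_split big_split /= sumrN sumr_const card_ord -!mulr_sumr sumrB -/Suu.
rewrite (eq_bigr _ (fun i _ => dotpDr _ _ _)) big_split /= -dotp_sumr sum_eps dotpZr -/Su.
rewrite /V lyapE -mulr_natr.
by field; rewrite subr_eq0 eq_sym beta_neq1 n_neq0 m_neq0.
Qed.

Definition sdca_gradient_condition : Prop := forall x : 'rV[R]_p,
  alpha / (1 - beta) * \sum_i dotp (grad i x - grad i xs) (grad i x - grad i xs)
  <= 2 * \sum_i dotp (x - xs) (grad i x - grad i xs) + m * n%:R * dotp (x - xs) (x - xs).

Hypotheses (alpha_ge0 : 0 <= alpha) (beta_lt1 : beta < 1).

Fact stepsize_ratio_ge0 : 0 <= alpha / (1 - beta).
Proof. by rewrite divr_ge0 // subr_ge0 ltW. Qed.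

Lemma cocoercive_gradient_condition {f : 'I_n -> 'rV[R]_p -> R} {L : R} :
  0 < L -> (forall i, in_F0L L (f i) (grad i)) ->
  alpha / (1 - beta) * L <= 2 -> sdca_gradient_condition.
Proof.
move=> L_gt0 F0L qL_le2 x; have q_ge0 := stepsize_ratio_ge0.
have cocoer i : dotp (grad i x - grad i xs) (grad i x - grad i xs)
    <= L * dotp (x - xs) (grad i x - grad i xs).
  by rewrite dotpC; exact: F0L_cocoercive.
have Su_ge0 : 0 <= \sum_i dotp (x - xs) (grad i x - grad i xs).
  apply: sumr_ge0 => i _; rewrite -(pmulr_rge0 _ L_gt0).
  exact: le_trans (dotp_ge0 _) (cocoer i).
have mn_e_ge0 : 0 <= m * n%:R * dotp (x - xs) (x - xs).
  by rewrite !mulr_ge0 ?ler0n ?dotp_ge0 // ltW.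
apply: le_trans (_ : alpha / (1 - beta) * (L * \sum_i dotp (x - xs) (grad i x - grad i xs)) <= _).
  by apply: ler_wpM2l => //; rewrite mulr_sumr; apply: ler_sum => i _.
by rewrite mulrA; nra.
Qed.

Lemma smooth_gradient_condition {F : 'rV[R]_p -> R} {L : R} :
  0 <= L -> (forall i, L_smooth L (grad i)) ->
  convex_fun F -> is_gradient F (fun x => \sum_i grad i x) ->
  alpha / (1 - beta) * L ^+ 2 <= m -> sdca_gradient_condition.
Proof.
move=> L_ge0 smooth cvx grad_sum qL2_le_m x; have q_ge0 := stepsize_ratio_ge0.
have Su_ge0 : 0 <= \sum_i dotp (x - xs) (grad i x - grad i xs).
  rewrite -dotp_sumr sumrB dotpC; exact: convex_gradient_monotone cvx grad_sum.
have Suu_le : \sum_i dotp (grad i x - grad i xs) (grad i x - grad i xs)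
    <= n%:R * (L ^+ 2 * dotp (x - xs) (x - xs)).
  apply: le_trans (ler_sum _ (fun i _ => L_smooth_dotp x xs L_ge0 (smooth i))) _.
  by rewrite sumr_const card_ord mulr_natl.
apply: le_trans (_ : alpha / (1 - beta) * (n%:R * (L ^+ 2 * dotp (x - xs) (x - xs))) <= _).
  exact: ler_wpM2l.
have ne_ge0 : 0 <= n%:R * dotp (x - xs) (x - xs) by rewrite mulr_ge0 ?ler0n ?dotp_ge0.
nra.
Qed.

Hypothesis gradient_condition : sdca_gradient_condition.

Lemma sdca_expected_descent y :
  n%:R^-1 * \sum_i lyap m grad c xs (sdca_step m alpha grad y i)
  <= (1 - m * alpha) * lyap m grad c xs y.
Proof.
rewrite mean_lyap_sdca_step ?lt_eqF // lerBlDr lerDl.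
by apply: mulr_ge0; [rewrite divr_ge0 ?ler0n | rewrite subr_ge0 gradient_condition].
Qed.

Theorem sdca_linear_convergence y0 k :
  Exp_unif k (fun s => lyap m grad c xs (sdca_y m alpha grad y0 s))
  <= (1 - m * alpha) ^+ k * lyap m grad c xs y0.
Proof.
apply: (Exp_unif_foldl_le _ sdca_expected_descent).
have n_ge1 : 1 <= n%:R :> R by rewrite ler1n.
by rewrite subr_ge0; apply: le_trans (ltW beta_lt1); rewrite mulrC ler_peMr // mulr_ge0 // ltW.
Qed.

End SDCA.

Section StepSizes.
Variables (F : realFieldType) (L m N alpha : F).
Hypotheses (L_gt0 : 0 < L) (m_gt0 : 0 < m) (N_ge0 : 0 <= N) (alpha_gt0 : 0 < alpha).

Lemma cocoercive_stepsize : alpha <= 2 / (L + 2 * m * N) ->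
  alpha * m * N < 1 /\ alpha / (1 - alpha * m * N) * L <= 2.
Proof.
have mN_ge0 : 0 <= m * N by rewrite mulr_ge0 // ltW.
rewrite ler_pdivlMr => [aL|]; last by rewrite -mulrA ltr_pwDl // mulr_ge0.
have beta_lt1 : alpha * m * N < 1 by have := mulr_gt0 alpha_gt0 L_gt0; nra.
by split=> //; rewrite mulrAC ler_pdivrMr ?subr_gt0 //; nra.
Qed.

Lemma smooth_stepsize : alpha <= m / (L ^+ 2 + m ^+ 2 * N) ->
  alpha * m * N < 1 /\ alpha / (1 - alpha * m * N) * L ^+ 2 <= m.
Proof.
have L2_gt0 : 0 < L ^+ 2 by rewrite exprn_gt0.
have m2N_ge0 : 0 <= m ^+ 2 * N by rewrite mulr_ge0 ?sqr_ge0.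
rewrite ler_pdivlMr => [aL|]; last by rewrite ltr_pwDl.
have beta_lt1 : alpha * m * N < 1.
  by rewrite -(ltr_pM2l m_gt0) mulr1; have := mulr_gt0 alpha_gt0 L2_gt0; nra.
by split=> //; rewrite mulrAC ler_pdivrMr ?subr_gt0 //; nra.
Qed.

End StepSizes.

Theorem corollary3 (R : realType) (p n : nat) (m L : R)
  (f : 'I_n -> 'rV[R]_p -> R) (grad : 'I_n -> 'rV[R]_p -> 'rV[R]_p)
  (xstar : 'rV[R]_p) (y0 : 'I_n -> 'rV[R]_p) :
  (0 < n)%N -> 0 < m -> 0 < L ->
  (forall i, C1_with_grad (f i) (grad i)) ->
  in_F0L L (fun x => \sum_(i < n) f i x) (fun x => \sum_(i < n) grad i x) ->
  (forall x, (n%:R)^-1 * \sum_(i < n) f i xstar + m / 2 * enorm xstar ^+ 2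
             <= (n%:R)^-1 * \sum_(i < n) f i x + m / 2 * enorm x ^+ 2) ->
  let c alpha := alpha / ((1 - alpha * m * n%:R) * (m * n%:R)) in
  (* item 1 *)
  ((forall i, in_F0L L (f i) (grad i)) ->
   forall alpha, 0 < alpha -> alpha <= 2 / (L + 2 * m * n%:R) ->
   forall k : nat,
     Exp_unif k (fun s => lyap m grad (c alpha) xstar (sdca_y m alpha grad y0 s))
     <= (1 - m * alpha) ^+ k * lyap m grad (c alpha) xstar y0)
  /\
  (* item 2 *)
  ((forall i, L_smooth L (grad i)) ->
   (forall alpha, 0 < alpha -> alpha <= m / (L ^+ 2 + m ^+ 2 * n%:R) ->
    forall k : nat,
      Exp_unif k (fun s => lyap m grad (c alpha) xstar (sdca_y m alpha grad y0 s))
      <= (1 - m * alpha) ^+ k * lyap m grad (c alpha) xstar y0)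
   /\
   (let alpha := m / (m ^+ 2 * n%:R + L ^+ 2) in
    forall k : nat,
      Exp_unif k (fun s => lyap m grad (L ^+ 2 * n%:R)^-1 xstar
                              (sdca_y m alpha grad y0 s))
      <= (1 - m ^+ 2 / (m ^+ 2 * n%:R + L ^+ 2)) ^+ k
         * lyap m grad (L ^+ 2 * n%:R)^-1 xstar y0)).
Proof.
move=> n_gt0 m_gt0 L_gt0 _ [cvx [[grad_sum _] smooth_sum]] xs_min c.
have nR_gt0 : 0 < n%:R :> R by rewrite ltr0n.
have stationarity := gradient_at_scaled_regularized_min nR_gt0 m_gt0 grad_sum xs_min.
split=> [F0L alpha alpha_gt0 /cocoercive_stepsize[] // beta_lt1 qL_le2 k|smooth].
  apply: (sdca_linear_convergence n_gt0 m_gt0 stationarity (ltW alpha_gt0) beta_lt1).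
  exact: (cocoercive_gradient_condition m_gt0 (ltW alpha_gt0) beta_lt1 L_gt0 F0L qL_le2).
have item2 alpha : 0 < alpha -> alpha <= m / (L ^+ 2 + m ^+ 2 * n%:R) -> forall k : nat,
    Exp_unif k (fun s => lyap m grad (c alpha) xstar (sdca_y m alpha grad y0 s))
    <= (1 - m * alpha) ^+ k * lyap m grad (c alpha) xstar y0.
  move=> alpha_gt0 /smooth_stepsize[] // beta_lt1 qL2_le_m k.
  apply: (sdca_linear_convergence n_gt0 m_gt0 stationarity (ltW alpha_gt0) beta_lt1).
  exact: (smooth_gradient_condition (ltW alpha_gt0) beta_lt1 (ltW L_gt0) smooth cvx grad_sum
    qL2_le_m).
split=> // alpha k.
have D_gt0 : 0 < m ^+ 2 * n%:R + L ^+ 2 by rewrite ltr_pwDr ?exprn_gt0 // mulr_ge0 ?sqr_ge0.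
have -> : (L ^+ 2 * n%:R)^-1 = c alpha.
  by rewrite /c /alpha; field; rewrite -expr2 addrAC subrr add0r !gt_eqF ?exprn_gt0.
have -> : m ^+ 2 / (m ^+ 2 * n%:R + L ^+ 2) = m * alpha by rewrite /alpha mulrA -expr2.
by apply: item2; rewrite /alpha ?divr_gt0 // addrC.
Qed.
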